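(* Let $D$ be a digraph with $n$ nodes. If $D$ contains no arcs, or if $n\in\{1,2\}$, then the burning number of $D$ equals $n$. If $n>2$ and $D$ has at least one arc, then the burning number of $D$ is at most $n-1$, and this bound is sharp: for every $n>2$ there exists a digraph with $n$ nodes and at least one arc whose burning number equals $n-1$.
   Context: Burning process on a digraph $D$: a sequence $(x_1,\ldots,x_b)$ of nodes is a burning sequence for $D$ if after $b$ steps of the following process every node of $D$ is burned; the $i$-th step consists of first burning all out-neighbours of all currently burned nodes, and then burning the node $x_i$ (so after the first step only $x_1$ is burned). The burning number of $D$ is the length of a shortest burning sequence for $D$. Equivalently, writing $N^+_k(v)$ for the set of nodes reachable from $v$ by a directed path with at most $k$ arcs (so $N^+_0(v)=\{v\}$), the burning number is the least $b$ for which there are nodes $v_1,\ldots,v_b$ with $V(D)=\bigcup_{i=1}^b N^+_{i-1}(v_i)$. *)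

From mathcomp Require Import all_boot.
Set Implicit Arguments. Unset Strict Implicit. Unset Printing Implicit Defensive.

(* A (finite) digraph is a finite node type T with an arc relation e : rel T;
   arcs are ordered pairs (x, y) with e x y.  Digraphs are loopless:
   the statements below assume [irreflexive e]. *)

Definition out_ball (T : finType) (e : rel T) (k : nat) (v u : T) : Prop :=
  exists p : seq T, [&& path e v p, last v p == u & size p <= k].

(* s = (x_1, ..., x_b) is a burning sequence: V(D) = \bigcup_i N^+_{i-1}(x_i)
   (with 0-based index i here: N^+_i(nth i s)). *)
Definition burning_seq (T : finType) (e : rel T) (s : seq T) : Prop :=
  forall x : T, exists i, i < size s /\ out_ball e i (nth x s i) x.

Definition is_burning_number (T : finType) (e : rel T) (b : nat) : Prop :=
  (exists s : seq T, size s = b /\ burning_seq e s) /\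
  (forall s : seq T, burning_seq e s -> b <= size s).

(* A node without in-arcs lies in a ball N^+_k(v) only if it is v itself, so
   a burning sequence must name every such source; this gives the lower bound
   n for arcless digraphs and n - 1 for the digraph whose only arc is 0 -> 1.
   A sequence of length at most one covers at most one node, which settles
   n <= 2.  Conversely, given an arc x -> y and n > 2, the ball of radius
   n - 2 >= 1 around x covers x and y, and each of the other n - 2 nodes is
   covered by the ball of radius 0 around itself. *)
From mathcomp Require Import all_boot.
Set Implicit Arguments. Unset Strict Implicit. Unset Printing Implicit Defensive.

Section Burning.
Variables (T : finType) (e : rel T).

Lemma out_ball_refl k v : out_ball e k v v.
Proof. by exists [::]; rewrite /= eqxx. Qed.

Lemma out_ball0 v u : out_ball e 0 v u -> u = v.
Proof. by case=> [[|a p]] /and3P [_ /eqP <-]. Qed.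

Lemma out_ball_arc k x y : 0 < k -> e x y -> out_ball e k x y.
Proof. by move=> k_gt0 exy; exists [:: y]; rewrite /= exy eqxx. Qed.

Definition sources : {set T} := [set u | [forall w, ~~ e w u]].

Lemma out_ball_source k v u : u \in sources -> out_ball e k v u -> u = v.
Proof.
rewrite inE => /forallP no_arc_to_u [p /and3P [vp /eqP last_p _]].
case/lastP: p vp last_p => [_ <- // | q a]; rewrite rcons_path last_rcons.
by case/andP=> _ arc a_u; move: (no_arc_to_u (last v q)); rewrite -a_u arc.
Qed.

Lemma sourcesT : (forall x y, ~~ e x y) -> sources = setT.
Proof. by move=> no_arc; apply/setP => u; rewrite !inE; apply/forallP. Qed.

Lemma burning_seq_enum : burning_seq e (enum T).
Proof.
move=> x; exists (index x (enum T)); rewrite index_mem mem_enum.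
by rewrite nth_index ?mem_enum //; split=> //; apply: out_ball_refl.
Qed.

Lemma card_sources_le_burning s : burning_seq e s -> #|sources| <= size s.
Proof.
move=> burn_s; apply: leq_trans (card_size s); apply/subset_leq_card/subsetP.
move=> u src_u; have [i [lt_i_s ball_u]] := burn_s u.
by rewrite (out_ball_source src_u ball_u) mem_nth.
Qed.

Lemma card_le_burning_arcs_to y s :
  (forall a b, e a b -> b = y) -> burning_seq e s -> #|T|.-1 <= size s.
Proof.
move=> arcs_to_y burn_s; rewrite -(cardsC1 y).
apply: leq_trans (card_sources_le_burning burn_s); apply/subset_leq_card.
apply/subsetP => u; rewrite !inE => neq_uy; apply/forallP => w.
by apply: contra neq_uy => /arcs_to_y ->.
Qed.

Lemma card_le_short_burning s :
  burning_seq e s -> size s <= 1 -> #|T| <= size s.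
Proof.
case: s => [|a [|//]] burn_s _.
  by rewrite leqn0; apply/eqP/eq_card0 => x; have [i []] := burn_s x.
rewrite /= -cardsT -(cards1 a); apply/subset_leq_card/subsetP => x _.
have [[|i] [lt_i ball_x]] := burn_s x; last by [].
by rewrite (out_ball0 ball_x) inE.
Qed.

Lemma card_le_burning_small s :
  #|T| <= 2 -> burning_seq e s -> #|T| <= size s.
Proof.
move=> card_le2 burn_s; rewrite leqNgt; apply/negP => lt_s_T.
have short_s : size s <= 1 by rewrite -ltnS (leq_trans lt_s_T).
by move: (card_le_short_burning burn_s short_s); rewrite leqNgt lt_s_T.
Qed.

Lemma exists_burning_seq_arc x y : 2 < #|T| -> x != y -> e x y ->
  exists2 s, size s = #|T| - 1 & burning_seq e s.
Proof.
move=> card_gt2 neq_xy exy; set r := enum (~: [set x; y]).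
have size_r : size r = #|T| - 2 by rewrite -cardE cardsCs setCK cards2 neq_xy.
exists (rcons r x); first by rewrite size_rcons size_r -subSn ?subSS // ltnW.
move=> z; case: (boolP (z \in r)) => [z_r | z_nr].
  exists (index z r); rewrite size_rcons ltnS index_size.
  by rewrite nth_rcons index_mem z_r nth_index //; split=> //; apply: out_ball_refl.
exists (size r); rewrite size_rcons ltnS leqnn nth_rcons ltnn eqxx; split=> //.
move: z_nr; rewrite /r mem_enum !inE negbK => /orP [/eqP -> | /eqP ->].
  exact: out_ball_refl.
by apply: out_ball_arc; rewrite // size_r subn_gt0.
Qed.

End Burning.

Theorem mainTheorem1 :
  (forall (T : finType) (e : rel T), irreflexive e ->
     ((forall x y : T, ~~ e x y) \/ #|T| = 1 \/ #|T| = 2) ->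
     is_burning_number e #|T|) /\
  (forall (T : finType) (e : rel T), irreflexive e ->
     2 < #|T| -> (exists x y : T, e x y) ->
     forall b, is_burning_number e b -> b <= #|T| - 1) /\
  (forall n : nat, 2 < n ->
     exists e : rel 'I_n, [/\ irreflexive e, (exists x y : 'I_n, e x y) &
                             is_burning_number e (n - 1)]).
Proof.
split; [|split].
- move=> T e _ arcless_or_small; split.
    by exists (enum T); rewrite -cardE; split; last exact: burning_seq_enum.
  move=> s burn_s; case: arcless_or_small => [no_arc | card12].
    by rewrite -cardsT -(sourcesT no_arc) card_sources_le_burning.
  by apply: card_le_burning_small burn_s; case: card12 => ->.
- move=> T e irr card_gt2 [x [y exy]] b [_ min_b].
  have neq_xy : x != y by apply: contraTneq exy => ->; rewrite irr.
  have [s <- burn_s] := exists_burning_seq_arc card_gt2 neq_xy exy.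
  exact: min_b.
move=> n n_gt2; have n_gt1 := ltnW n_gt2; have n_gt0 := ltnW n_gt1.
pose e : rel 'I_n := fun a b => (val a == 0) && (val b == 1).
pose o0 := Ordinal n_gt0; pose o1 := Ordinal n_gt1.
have irr : irreflexive e by case=> [[|[|a]] ?]; rewrite /= ?andbF.
have e01 : e o0 o1 by [].
have arcs_to_o1 a b : e a b -> b = o1 by case/andP=> _ /eqP b1; apply: val_inj.
exists e; split=> //; first by exists o0, o1.
split.
  have card_gt2 : 2 < #|'I_n| by rewrite card_ord.
  have [s size_s burn_s] := @exists_burning_seq_arc _ e o0 o1 card_gt2 isT e01.
  by exists s; rewrite size_s card_ord.
move=> s /(card_le_burning_arcs_to arcs_to_o1).
by rewrite card_ord subn1.
Qed.
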